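(* For all types $A,B$, if $A\equiv B$ then $[\![A]\!]=[\![B]\!]$.
   Context: Terms: $t,s,u ::= x \mid \lambda x.t \mid ts \mid \langle t,s\rangle \mid \pi_1 t \mid \pi_2 t$ (up to $\alpha$-renaming). Top-level rules: $(\lambda x.t)s \mapsto t\{x:=s\}$; $\pi_i\langle t_1,t_2\rangle \mapsto t_i$ ($i=1,2$); $\langle t,s\rangle u \mapsto \langle tu, su\rangle$; $\pi_i(\lambda x.t)\mapsto \lambda x.\pi_i t$ ($i=1,2$); $\to_{\mathsf{dist}}$ is the closure of these rules under all term constructors. $\mathrm{SN}$ is the set of strongly normalizing terms for $\to_{\mathsf{dist}}$. Types: $A ::= \tau \mid A\Rightarrow A \mid A\wedge A$ with $\tau$ a single atomic type. The relation $\equiv$ on types is the smallest equivalence relation containing $A\Rightarrow (B\wedge C)\equiv (A\Rightarrow B)\wedge(A\Rightarrow C)$ for all $A,B,C$ and closed under congruence for $\Rightarrow$ and $\wedge$ in both arguments. Interpretation: $[\![\tau]\!]=\mathrm{SN}$; $[\![A\Rightarrow B]\!]=\{t\mid \forall s\in[\![A]\!],\ ts\in[\![B]\!]\}$; $[\![A\wedge B]\!]=\{t\mid \pi_1t\in[\![A]\!]\text{ and }\pi_2 t\in[\![B]\!]\}$. *)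

(* Terms use de Bruijn indices (terms up to alpha-renaming). *)
From Stdlib Require Import Arith Lia.

Inductive term : Type :=
| Var : nat -> term
| Lam : term -> term
| App : term -> term -> term
| Pair : term -> term -> term
| Proj1 : term -> term
| Proj2 : term -> term.

Fixpoint lift (k : nat) (t : term) : term :=
  match t with
  | Var n => if Nat.ltb n k then Var n else Var (S n)
  | Lam t => Lam (lift (S k) t)
  | App t s => App (lift k t) (lift k s)
  | Pair t s => Pair (lift k t) (lift k s)
  | Proj1 t => Proj1 (lift k t)
  | Proj2 t => Proj2 (lift k t)
  end.

(* subst k s t : replace index k in t by s, decrementing indices > k
   (capture-avoiding substitution t{x:=s} for the bound variable x = index k) *)
Fixpoint subst (k : nat) (s : term) (t : term) : term :=
  match t with
  | Var n =>
      match Nat.compare n k with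
      | Lt => Var n
      | Eq => s
      | Gt => Var (pred n)
      end
  | Lam t => Lam (subst (S k) (lift 0 s) t)
  | App t1 t2 => App (subst k s t1) (subst k s t2)
  | Pair t1 t2 => Pair (subst k s t1) (subst k s t2)
  | Proj1 t => Proj1 (subst k s t)
  | Proj2 t => Proj2 (subst k s t)
  end.

Inductive step : term -> term -> Prop :=
| st_beta : forall t s, step (App (Lam t) s) (subst 0 s t)
| st_proj1 : forall t1 t2, step (Proj1 (Pair t1 t2)) t1
| st_proj2 : forall t1 t2, step (Proj2 (Pair t1 t2)) t2
| st_pairapp : forall t s u, step (App (Pair t s) u) (Pair (App t u) (App s u))
| st_proj1lam : forall t, step (Proj1 (Lam t)) (Lam (Proj1 t))
| st_proj2lam : forall t, step (Proj2 (Lam t)) (Lam (Proj2 t))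
| st_lam : forall t t', step t t' -> step (Lam t) (Lam t')
| st_appl : forall t t' s, step t t' -> step (App t s) (App t' s)
| st_appr : forall t s s', step s s' -> step (App t s) (App t s')
| st_pairl : forall t t' s, step t t' -> step (Pair t s) (Pair t' s)
| st_pairr : forall t s s', step s s' -> step (Pair t s) (Pair t s')
| st_proj1c : forall t t', step t t' -> step (Proj1 t) (Proj1 t')
| st_proj2c : forall t t', step t t' -> step (Proj2 t) (Proj2 t').

Definition SN (t : term) : Prop := Acc (fun u v => step v u) t.

Inductive ty : Type :=
| Atom : ty
| Arr : ty -> ty -> ty
| And : ty -> ty -> ty.

Inductive ty_equiv : ty -> ty -> Prop :=
| eq_dist : forall A B C, ty_equiv (Arr A (And B C)) (And (Arr A B) (Arr A C))
| eq_refl : forall A, ty_equiv A A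
| eq_sym : forall A B, ty_equiv A B -> ty_equiv B A
| eq_trans : forall A B C, ty_equiv A B -> ty_equiv B C -> ty_equiv A C
| eq_arr : forall A A' B B', ty_equiv A A' -> ty_equiv B B' ->
    ty_equiv (Arr A B) (Arr A' B')
| eq_and : forall A A' B B', ty_equiv A A' -> ty_equiv B B' ->
    ty_equiv (And A B) (And A' B').

Fixpoint interp (A : ty) : term -> Prop :=
  match A with
  | Atom => SN
  | Arr A B => fun t => forall s, interp A s -> interp B (App t s)
  | And A B => fun t => interp A (Proj1 t) /\ interp B (Proj2 t)
  end.

From Stdlib Require Import Arith Lia List Relations.

(* Only the distributivity axiom needs an argument: the other rules of [ty_equiv] are respected
   by any compositional interpretation.  A term [u] satisfies [interp B u] iff [E[u]] is strongly
   normalizing for every elimination context [E] of type [B] (arguments in the interpretations of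
   the argument types, projections following the conjunctions of [B]).  For [s] in [interp A]
   (hence SN) it thus suffices that [E[π1 (t s)]] and [E[(π1 t) s]] are SN together, provided
   [(π2 t) s] is SN; both directions go by induction on reductions, using head expansion for β
   and for projections of pairs.  The statements for [π2] follow through the reduction
   automorphism that exchanges the two components of pairs. *)

Ltac solve_index :=
  repeat (cbn [lift subst]; match goal with
  | |- context [Nat.ltb ?a ?b] => destruct (Nat.ltb_spec a b)
  | |- context [Nat.compare ?a ?b] => destruct (Nat.compare_spec a b)
  end); cbn [lift subst]; try subst; try lia; try reflexivity; try (f_equal; lia).

Lemma lift_lift t : forall i k, i <= k -> lift (S k) (lift i t) = lift i (lift k t).
Proof.
  induction t; intros i k Hik; cbn [lift];
    [solve_index | f_equal; apply IHt; lia | f_equal; auto ..].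
Qed.

Lemma lift_subst_ge t : forall n k s, n <= k ->
  lift k (subst n s t) = subst n (lift k s) (lift (S k) t).
Proof.
  induction t; intros n' k s Hk; cbn [lift subst];
    [solve_index | rewrite IHt, lift_lift by lia; reflexivity | f_equal; auto ..].
Qed.

Lemma lift_subst_le t : forall n k s, k <= n ->
  lift k (subst n s t) = subst (S n) (lift k s) (lift k t).
Proof.
  induction t; intros n' k s Hk; cbn [lift subst];
    [solve_index | rewrite IHt, lift_lift by lia; reflexivity | f_equal; auto ..].
Qed.

Lemma subst_lift t : forall k s, subst k s (lift k t) = t.
Proof. induction t; intros k s; cbn [lift subst]; [solve_index | f_equal; auto ..]. Qed.

Lemma subst_subst t : forall n k u s, n <= k ->
  subst k u (subst n s t) = subst n (subst k u s) (subst (S k) (lift n u) t).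
Proof.
  induction t; intros n' k u s Hk; cbn [lift subst];
    [ solve_index; rewrite subst_lift; reflexivity
    | f_equal; rewrite IHt by lia; rewrite lift_subst_le, lift_lift by lia; reflexivity
    | f_equal; auto .. ].
Qed.

Lemma step_lift t t' : step t t' -> forall k, step (lift k t) (lift k t').
Proof.
  induction 1; intros k; cbn; try (constructor; auto).
  rewrite lift_subst_ge by lia; constructor.
Qed.

Lemma step_subst t t' : step t t' -> forall k u, step (subst k u t) (subst k u t').
Proof.
  induction 1; intros k w; cbn; try (constructor; auto).
  rewrite (subst_subst t 0 k) by lia; constructor.
Qed.

Notation "a ->* b" := (clos_refl_trans term step a b) (at level 70).

Lemma star_cong (f : term -> term) :
  (forall a b, step a b -> step (f a) (f b)) -> forall a b, a ->* b -> f a ->* f b.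
Proof. intros Hf a b H; induction H; eauto using rt_step, rt_refl, rt_trans. Qed.

Lemma star_subst_arg t : forall k s s', step s s' -> subst k s t ->* subst k s' t.
Proof.
  induction t; intros k s s' Hs; cbn [subst].
  - destruct (Nat.compare n k); auto using rt_step, rt_refl.
  - apply star_cong; [constructor; assumption | auto using step_lift].
  - apply rt_trans with (App (subst k s' t1) (subst k s t2)).
    + apply (star_cong (fun x => App x _)); [constructor; assumption | auto].
    + apply star_cong; [constructor; assumption | auto].
  - apply rt_trans with (Pair (subst k s' t1) (subst k s t2)).
    + apply (star_cong (fun x => Pair x _)); [constructor; assumption | auto].
    + apply star_cong; [constructor; assumption | auto].
  - apply star_cong; [constructor; assumption | auto].
  - apply star_cong; [constructor; assumption | auto].
Qed.

Lemma SN_step t t' : SN t -> step t t' -> SN t'.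
Proof. intros [H] Hs; exact (H _ Hs). Qed.

Lemma SN_star t t' : t ->* t' -> SN t -> SN t'.
Proof. induction 1; eauto using SN_step. Qed.

Lemma SN_preimage (f : term -> term) :
  (forall a b, step a b -> step (f a) (f b)) -> forall u, SN (f u) -> SN u.
Proof.
  intros Hf u H; remember (f u) as v eqn:Hv; revert u Hv.
  induction H as [v _ IH]; intros u ->.
  constructor; intros u' Hu; eapply IH; [apply Hf, Hu | reflexivity].
Qed.

Lemma step_app_inv t s N : step (App t s) N ->
  (exists u, t = Lam u /\ N = subst 0 s u) \/
  (exists t1 t2, t = Pair t1 t2 /\ N = Pair (App t1 s) (App t2 s)) \/
  (exists t', step t t' /\ N = App t' s) \/
  (exists s', step s s' /\ N = App t s').
Proof. inversion 1; subst; eauto 7. Qed.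

Lemma step_proj1_inv u N : step (Proj1 u) N ->
  (exists y, u = Pair N y) \/
  (exists t, u = Lam t /\ N = Lam (Proj1 t)) \/
  (exists u', step u u' /\ N = Proj1 u').
Proof. inversion 1; subst; eauto 6. Qed.

Lemma step_pair_inv x y N : step (Pair x y) N ->
  (exists x', step x x' /\ N = Pair x' y) \/ (exists y', step y y' /\ N = Pair x y').
Proof. inversion 1; subst; eauto. Qed.

Lemma step_lam_inv u N : step (Lam u) N -> exists u', step u u' /\ N = Lam u'.
Proof. inversion 1; subst; eauto. Qed.

Inductive frame : Type :=
| FApp (a : term)
| FProj1
| FProj2.

Definition fill (f : frame) (h : term) : term :=
  match f with
  | FApp a => App h a
  | FProj1 => Proj1 h
  | FProj2 => Proj2 h
  end.

(* Elimination contexts are stacks of frames, innermost frame first. *)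
Fixpoint plug (E : list frame) (h : term) : term :=
  match E with
  | nil => h
  | f :: E => plug E (fill f h)
  end.

Inductive ctx_step : list frame -> list frame -> Prop :=
| ctx_step_here a a' E : step a a' -> ctx_step (FApp a :: E) (FApp a' :: E)
| ctx_step_there f E E' : ctx_step E E' -> ctx_step (f :: E) (f :: E').

Lemma plug_step E u u' : step u u' -> step (plug E u) (plug E u').
Proof.
  revert u u'; induction E as [|[a| |] E IH]; intros u u' Hu; cbn; auto;
    apply IH; constructor; exact Hu.
Qed.

Lemma plug_ctx_step E E' u : ctx_step E E' -> step (plug E u) (plug E' u).
Proof.
  intros H; revert u; induction H; intros u; cbn; auto.
  apply plug_step; constructor; assumption.
Qed.

Lemma SN_plug_step E u u' : SN (plug E u) -> step u u' -> SN (plug E u').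
Proof. eauto using SN_step, plug_step. Qed.

Definition intro_form (h : term) : Prop :=
  match h with
  | Lam _ | Pair _ _ => True
  | _ => False
  end.

(* A head that is neither a λ nor a pair forms no redex with the frames around it. *)
Lemma plug_step_inv E H N : ~ intro_form H -> step (plug E H) N ->
  (exists E', ctx_step E E' /\ N = plug E' H) \/ (exists H', step H H' /\ N = plug E H').
Proof.
  revert H N; induction E as [|f E IH]; cbn; intros H N HH Hs; eauto.
  assert (Hf : ~ intro_form (fill f H)) by (destruct f; intros []).
  destruct (IH (fill f H) N Hf Hs) as [[E' [HE ->]] | [H' [HH' ->]]].
  - left; exists (f :: E'); split; [constructor | ]; auto.
  - destruct f; cbn in HH'; inversion HH'; subst; cbn in HH; try contradiction; eauto.
    left; exists (FApp s' :: E); split; [constructor | ]; auto.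
Qed.

Lemma SN_plug_reducts E H : ~ intro_form H ->
  (forall E', ctx_step E E' -> SN (plug E' H)) ->
  (forall H', step H H' -> SN (plug E H')) -> SN (plug E H).
Proof.
  intros HH HE HH'; constructor; intros N Hs.
  destruct (plug_step_inv E H N HH Hs) as [[E' [? ->]] | [H' [? ->]]];
    [apply HE | apply HH']; assumption.
Qed.

Lemma SN_plug_proj1_pair y :
  SN y -> forall E x, SN (plug E x) -> SN (plug E (Proj1 (Pair x y))).
Proof.
  induction 1 as [y _ IHy]; intros E x Hx.
  remember (plug E x) as M eqn:HM; revert E x HM.
  induction Hx as [M HMacc IHM]; intros E x ->.
  apply SN_plug_reducts; [intros [] | intros E' HE | intros H' HH'].
  - eapply IHM; [apply plug_ctx_step, HE | reflexivity].
  - destruct (step_proj1_inv _ _ HH') as [[? [= <- _]] | [[? [[=] _]] | [p [Hp ->]]]].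
    + constructor; exact HMacc.
    + destruct (step_pair_inv _ _ _ Hp) as [[x' [Hx ->]] | [y' [Hy ->]]].
      * eapply IHM; [apply plug_step, Hx | reflexivity].
      * apply IHy; [exact Hy | constructor; exact HMacc].
Qed.

Lemma SN_plug_beta s :
  SN s -> forall E u, SN (plug E (subst 0 s u)) -> SN (plug E (App (Lam u) s)).
Proof.
  induction 1 as [s _ IHs]; intros E u Hu.
  remember (plug E (subst 0 s u)) as M eqn:HM; revert E u HM.
  induction Hu as [M HMacc IHM]; intros E u ->.
  apply SN_plug_reducts; [intros [] | intros E' HE | intros H' HH'].
  - eapply IHM; [apply plug_ctx_step, HE | reflexivity].
  - destruct (step_app_inv _ _ _ HH')
      as [[? [[= <-] ->]] | [[? [? [[=] _]]] | [[v [Hv ->]] | [s' [Hs' ->]]]]].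
    + constructor; exact HMacc.
    + destruct (step_lam_inv _ _ Hv) as [u' [Hu ->]].
      eapply IHM; [apply plug_step, step_subst, Hu | reflexivity].
    + apply IHs; [exact Hs' |].
      eapply SN_star; [| constructor; exact HMacc].
      apply (star_cong (plug E)); [apply plug_step | apply star_subst_arg, Hs'].
Qed.

(* For [t = Pair t1 t2], [Proj1 (App t s)] reduces to [App t1 s] via
   [Proj1 (Pair (App t1 s) (App t2 s))], discarding [App t2 s]: that term must be SN on its own. *)
Lemma SN_plug_proj1_app E t s :
  SN (plug E (App (Proj1 t) s)) -> SN (App (Proj2 t) s) -> SN (plug E (Proj1 (App t s))).
Proof.
  intros HQ; remember (plug E (App (Proj1 t) s)) as M eqn:HM; revert E t s HM.
  induction HQ as [M HMacc IHM]; intros E t s -> Hsnd.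
  assert (HQ : SN (plug E (App (Proj1 t) s))) by (constructor; exact HMacc).
  apply SN_plug_reducts; [intros [] | intros E' HE | intros H' HH'].
  - eapply IHM; [apply plug_ctx_step, HE | reflexivity | exact Hsnd].
  - destruct (step_proj1_inv _ _ HH') as [[? [=]] | [[? [[=] _]] | [v [Hv ->]]]].
    destruct (step_app_inv _ _ _ Hv)
      as [[u [-> ->]] | [[t1 [t2 [-> ->]]] | [[t' [Ht ->]] | [s' [Hs ->]]]]].
    + apply (SN_plug_step E (App (Lam (Proj1 u)) s)); [| constructor].
      apply (SN_plug_step _ _ _ HQ); do 2 constructor.
    + apply SN_plug_proj1_pair.
      * apply (SN_step _ _ Hsnd); do 2 constructor.
      * apply (SN_plug_step _ _ _ HQ); do 2 constructor.
    + eapply IHM; [apply plug_step; do 2 constructor; exact Ht | reflexivity |].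
      apply (SN_step _ _ Hsnd); do 2 constructor; exact Ht.
    + eapply IHM; [apply plug_step; constructor; exact Hs | reflexivity |].
      apply (SN_step _ _ Hsnd); constructor; exact Hs.
Qed.

Lemma SN_plug_app_proj1 E t s :
  SN s -> SN (plug E (Proj1 (App t s))) -> SN (plug E (App (Proj1 t) s)).
Proof.
  intros Hs HQ; remember (plug E (Proj1 (App t s))) as M eqn:HM; revert E t s Hs HM.
  induction HQ as [M HMacc IHM]; intros E t s Hs ->.
  assert (HQ : SN (plug E (Proj1 (App t s)))) by (constructor; exact HMacc).
  apply SN_plug_reducts; [intros [] | intros E' HE | intros H' HH'].
  - eapply IHM; [apply plug_ctx_step, HE | exact Hs | reflexivity].
  - destruct (step_app_inv _ _ _ HH')
      as [[? [[=] _]] | [[? [? [[=] _]]] | [[v [Hv ->]] | [s' [Hs' ->]]]]].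
    + destruct (step_proj1_inv _ _ Hv) as [[t2 ->] | [[u [-> ->]] | [t' [Ht ->]]]].
      * apply (SN_plug_step E (Proj1 (Pair (App v s) (App t2 s)))); [| constructor].
        apply (SN_plug_step _ _ _ HQ); do 2 constructor.
      * apply SN_plug_beta; [exact Hs |].
        apply (SN_plug_step _ _ _ HQ); do 2 constructor.
      * eapply IHM; [apply plug_step; do 2 constructor; exact Ht | exact Hs | reflexivity].
    + eapply IHM; [apply plug_step; do 2 constructor; exact Hs' | | reflexivity].
      apply (SN_step _ _ Hs Hs').
Qed.

Fixpoint swap (t : term) : term :=
  match t with
  | Var n => Var n
  | Lam t => Lam (swap t)
  | App t s => App (swap t) (swap s)
  | Pair t s => Pair (swap s) (swap t)
  | Proj1 t => Proj2 (swap t)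
  | Proj2 t => Proj1 (swap t)
  end.

Definition swap_frame (f : frame) : frame :=
  match f with
  | FApp a => FApp (swap a)
  | FProj1 => FProj2
  | FProj2 => FProj1
  end.

Lemma swap_involutive t : swap (swap t) = t.
Proof. induction t; cbn; congruence. Qed.

Lemma swap_lift t : forall k, swap (lift k t) = lift k (swap t).
Proof.
  induction t; intros k; cbn [swap lift]; [destruct (Nat.ltb n k); reflexivity | f_equal; auto ..].
Qed.

Lemma swap_subst t : forall k s, swap (subst k s t) = subst k (swap s) (swap t).
Proof.
  induction t; intros k s; cbn [swap subst];
    [ destruct (Nat.compare n k); reflexivity
    | f_equal; rewrite IHt, swap_lift; reflexivity
    | f_equal; auto .. ].
Qed.

Lemma swap_plug E u : swap (plug E u) = plug (map swap_frame E) (swap u).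
Proof. revert u; induction E as [|[a| |] E IH]; intros u; cbn; auto. Qed.

Lemma step_swap t t' : step t t' -> step (swap t) (swap t').
Proof.
  induction 1; cbn; try (constructor; assumption).
  rewrite swap_subst; constructor.
Qed.

Lemma SN_swap t : SN t -> SN (swap t).
Proof.
  intros H; apply (SN_preimage swap step_swap); rewrite swap_involutive; exact H.
Qed.

Lemma SN_unswap t : SN (swap t) -> SN t.
Proof. intros H; rewrite <- swap_involutive; apply SN_swap, H. Qed.

Lemma SN_plug_swap E u : SN (plug E u) -> SN (plug (map swap_frame E) (swap u)).
Proof. rewrite <- swap_plug; apply SN_swap. Qed.

Lemma SN_plug_proj2_app E t s :
  SN (plug E (App (Proj2 t) s)) -> SN (App (Proj1 t) s) -> SN (plug E (Proj2 (App t s))).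
Proof.
  intros HQ Hfst; apply SN_unswap; rewrite swap_plug.
  apply SN_plug_proj1_app; [exact (SN_plug_swap _ _ HQ) | exact (SN_swap _ Hfst)].
Qed.

Lemma SN_plug_app_proj2 E t s :
  SN s -> SN (plug E (Proj2 (App t s))) -> SN (plug E (App (Proj2 t) s)).
Proof.
  intros Hs HQ; apply SN_unswap; rewrite swap_plug.
  apply SN_plug_app_proj1; [exact (SN_swap _ Hs) | exact (SN_plug_swap _ _ HQ)].
Qed.

Inductive neutral : term -> Prop :=
| neutral_var n : neutral (Var n)
| neutral_app h a : neutral h -> neutral (App h a)
| neutral_proj1 h : neutral h -> neutral (Proj1 h)
| neutral_proj2 h : neutral h -> neutral (Proj2 h).

Lemma neutral_step h h' : neutral h -> step h h' -> neutral h'.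
Proof.
  intros Hn; revert h'; induction Hn; intros h' Hs; inversion Hs; subst;
    try (match goal with H : neutral _ |- _ => inversion H end; fail);
    constructor; auto.
Qed.

Lemma SN_app_neutral h a : SN h -> neutral h -> SN a -> SN (App h a).
Proof.
  intros Hh; revert a; induction Hh as [h _ IHh]; intros a Hn Ha.
  induction Ha as [a Ha IHa]; constructor; intros N Hs.
  destruct (step_app_inv _ _ _ Hs)
    as [[? [-> _]] | [[? [? [-> _]]] | [[h' [Hh' ->]] | [a' [Ha' ->]]]]].
  - inversion Hn.
  - inversion Hn.
  - apply IHh; [exact Hh' | eapply neutral_step; eassumption | constructor; exact Ha].
  - apply IHa, Ha'.
Qed.

Lemma SN_proj_neutral h : SN h -> neutral h -> SN (Proj1 h) /\ SN (Proj2 h).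
Proof.
  induction 1 as [h _ IH]; intros Hn; split; constructor; intros N Hs;
    inversion Hs; subst; try (inversion Hn; fail);
    edestruct IH as [H1 H2]; eauto using neutral_step.
Qed.

Lemma SN_var n : SN (Var n).
Proof. constructor; intros N Hs; inversion Hs. Qed.

Lemma interp_reducible A :
  (forall u, interp A u -> SN u) /\ (forall h, neutral h -> SN h -> interp A h).
Proof.
  induction A as [| A [SNA NA] B [SNB NB] | A [SNA NA] B [SNB NB]]; cbn.
  - auto.
  - split.
    + intros u Hu.
      apply (SN_preimage (fun x => App x (Var 0))); [constructor; assumption |].
      apply SNB, Hu, NA; [constructor | apply SN_var].
    + intros h Hn Hh s Hs; apply NB; [constructor; exact Hn | apply SN_app_neutral; auto].
  - split.
    + intros u [Hu _]; apply (SN_preimage Proj1); [constructor; assumption | auto].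
    + intros h Hn Hh; destruct (SN_proj_neutral h Hh Hn).
      split; [apply NA | apply NB]; auto using neutral.
Qed.

Lemma interp_SN A u : interp A u -> SN u.
Proof. apply interp_reducible. Qed.

Fixpoint elim_ctx (B : ty) (E : list frame) : Prop :=
  match B, E with
  | Atom, nil => True
  | Arr A B, FApp a :: E => interp A a /\ elim_ctx B E
  | And A B, FProj1 :: E => elim_ctx A E
  | And A B, FProj2 :: E => elim_ctx B E
  | _, _ => False
  end.

Lemma interp_iff_SN_plug B u : interp B u <-> forall E, elim_ctx B E -> SN (plug E u).
Proof.
  revert u; induction B as [| A _ B IHB | B IHB C IHC]; intros u; cbn.
  - split.
    + intros Hu [|f E] HE; [exact Hu | destruct f; contradiction].
    + intros H; apply (H nil I).
  - split.
    + intros Hu [|[a| |] E] HE; try contradiction.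
      destruct HE as [Ha HE]; exact (proj1 (IHB _) (Hu a Ha) E HE).
    + intros H s Hs; apply IHB; intros E HE; apply (H (FApp s :: E)); split; assumption.
  - split.
    + intros [H1 H2] [|[a| |] E] HE; try contradiction;
        [exact (proj1 (IHB _) H1 E HE) | exact (proj1 (IHC _) H2 E HE)].
    + intros H; split; [apply IHB | apply IHC]; intros E HE;
        [apply (H (FProj1 :: E)) | apply (H (FProj2 :: E))]; exact HE.
Qed.

Lemma interp_of_SN_plug B u v :
  (forall E, SN (plug E u) -> SN (plug E v)) -> interp B u -> interp B v.
Proof. rewrite !interp_iff_SN_plug; auto. Qed.

Lemma interp_dist A B C t :
  interp (Arr A (And B C)) t <-> interp (And (Arr A B) (Arr A C)) t.
Proof.
  cbn; split.
  - intros H; split; intros s Hs; destruct (H s Hs) as [H1 H2].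
    + apply (interp_of_SN_plug B (Proj1 (App t s))); [| exact H1].
      intros E; apply SN_plug_app_proj1, (interp_SN A s Hs).
    + apply (interp_of_SN_plug C (Proj2 (App t s))); [| exact H2].
      intros E; apply SN_plug_app_proj2, (interp_SN A s Hs).
  - intros [H1 H2] s Hs; split.
    + apply (interp_of_SN_plug B (App (Proj1 t) s)); [| exact (H1 s Hs)].
      intros E HE; apply SN_plug_proj1_app; [exact HE | apply (interp_SN C), H2, Hs].
    + apply (interp_of_SN_plug C (App (Proj2 t) s)); [| exact (H2 s Hs)].
      intros E HE; apply SN_plug_proj2_app; [exact HE | apply (interp_SN B), H1, Hs].
Qed.

Theorem lemma7 : forall A B : ty, ty_equiv A B -> forall t : term, interp A t <-> interp B t.
Proof.
  induction 1 as [A B C | A | A B _ IH | A B C _ IH1 _ IH2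
                 | A A' B B' _ IHA _ IHB | A A' B B' _ IHA _ IHB]; intros t.
  - apply interp_dist.
  - reflexivity.
  - symmetry; apply IH.
  - rewrite IH1; apply IH2.
  - cbn; split; intros Hf s Hs; apply IHB, Hf, IHA, Hs.
  - cbn; rewrite IHA, IHB; reflexivity.
Qed.
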